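(* Let $\Gamma=\mathrm{SL}_2(\mathbb Z)$, $\nu_{\mathbb H}\begin{pmatrix}a&b\\c&d\end{pmatrix}=a^2+b^2+c^2+d^2$, and for integers $m_1,m_2$ and $n\ge3$ let $$S_e(m_1,m_2,n)=\sum_{\substack{\gamma\in\Gamma\\ \nu_{\mathbb H}(\gamma)=n}}\exp\big(i(2\theta_1(\gamma)m_1+2\theta_2(\gamma)m_2)\big).$$ If $m_1$ or $m_2$ is odd, then $S_e(m_1,m_2,n)=0$. If both are even, then $$S_e(m_1,m_2,n)=\begin{cases}16\,W_{m_1+m_2}(n+2)\,W_{m_1-m_2}(n-2),& n\equiv2\bmod4,\\ 8\,W^P_{m_1+m_2}(n+2)\,W^P_{m_1-m_2}(n-2),& n\equiv3\bmod4,\\ 0,&\text{otherwise.}\end{cases}$$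
   Context: For $\theta\in\mathbb R$, $r\ge0$ let $k(\theta)=\begin{pmatrix}\cos\theta&\sin\theta\\-\sin\theta&\cos\theta\end{pmatrix}$, $a(e^{-r})=\mathrm{diag}(e^{-r/2},e^{r/2})$; each $\gamma$ is written $\gamma=k(\theta_1(\gamma))a(e^{-r})k(\theta_2(\gamma))$ with $r=d_{\mathbb H}(\gamma i,i)>0$ when $\nu_{\mathbb H}(\gamma)>2$, the angles being determined mod $\pi$. $N(z)=z\bar z$; $w\in\mathbb Z[i]$ is primary if $w\equiv1\bmod(1+i)^3$. $W_m(n)=\frac14\sum_{z\in\mathbb Z[i],N(z)=n}(z/|z|)^m$. For odd $n$, $W^P_m(n)=\sum_{z\in\mathbb Z[i],\,N(z)=n,\,z\text{ primary}}(z/|z|)^m$; $W^P_m(2^l)=e^{i\pi lm/4}$; and $W^P_m(2^ln')=W^P_m(2^l)W^P_m(n')$ for $n'$ odd. *)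

From HB Require Import structures.
From mathcomp Require Import all_boot all_order all_algebra.
From mathcomp Require Import all_classical all_reals.
From mathcomp Require Import all_analysis.
From mathcomp Require Import complex.

Set Implicit Arguments.
Unset Strict Implicit.
Unset Printing Implicit Defensive.

Import Order.TTheory GRing.Theory Num.Theory.
Local Open Scope ring_scope.
Local Open Scope complex_scope.

Section Defs.
Variable R : realType.

Definition mx22 (T : Type) (a b c d : T) : 'M[T]_2 :=
  \matrix_(i < 2, j < 2)
    if i == 0 :> nat then (if j == 0 :> nat then a else b)
    else (if j == 0 :> nat then c else d).

Definition kmat (t : R) : 'M[R]_2 := mx22 (cos t) (sin t) (- sin t) (cos t).
Definition amat (r : R) : 'M[R]_2 := mx22 (expR (- r / 2)) 0 0 (expR (r / 2)).

Definition nuH (g : 'M[int]_2) : int := \sum_(i < 2) \sum_(j < 2) g i j ^+ 2.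

Definition expi (t : R) : R[i] := cos t +i* sin t.

Definition rng (n : nat) : seq int := [seq (i%:Z - n%:Z)%R | i <- iota 0 (2 * n).+1].

(* Every such
   gamma has entries in [-n, n], so the four-fold sum over rng n enumerates
   exactly the (finite) set {gamma in SL_2(Z) | nu_H(gamma) = n}, each
   element once.  th1, th2 are the angle functions theta_1, theta_2. *)
Definition Se (th1 th2 : 'M[int]_2 -> R) (m1 m2 : int) (n : nat) : R[i] :=
  \sum_(a <- rng n) \sum_(b <- rng n) \sum_(c <- rng n)
   \sum_(d <- rng n | (\det (mx22 a b c d) == 1) && (nuH (mx22 a b c d) == n%:Z))
     expi (2 * th1 (mx22 a b c d) * m1%:~R + 2 * th2 (mx22 a b c d) * m2%:~R).

Definition zunit (x y : int) (n : nat) : R[i] :=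
  (x%:~R +i* y%:~R) / (Num.sqrt (n%:R : R))%:C.

Definition W (m : int) (n : nat) : R[i] :=
  4^-1 * \sum_(x <- rng n) \sum_(y <- rng n | x ^+ 2 + y ^+ 2 == n%:Z)
            zunit x y n ^ m.

(* Divisibility in Z[i]: (a1 + i a2) | (b1 + i b2), i.e.
   (b1 + i b2) * conj(a1 + i a2) / N(a1 + i a2) lies in Z[i]. *)
Definition gdvd (a1 a2 b1 b2 : int) : bool :=
  let N := a1 ^+ 2 + a2 ^+ 2 in
  (N %| b1 * a1 + b2 * a2)%Z && (N %| b2 * a1 - b1 * a2)%Z.

(* w = x + i y is primary iff w = 1 mod (1+i)^3, and (1+i)^3 = -2 + 2i *)
Definition primary (x y : int) : bool := gdvd (-2) 2 (x - 1) y.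

Definition WPodd (m : int) (n : nat) : R[i] :=
  \sum_(x <- rng n) \sum_(y <- rng n | (x ^+ 2 + y ^+ 2 == n%:Z) && primary x y)
     zunit x y n ^ m.

Definition WP (m : int) (n : nat) : R[i] :=
  let l := logn 2 n in
  expi (pi * l%:R * m%:~R / 4) * WPodd m (n %/ 2 ^ l).

End Defs.

From HB Require Import structures.
From mathcomp Require Import all_boot all_order all_algebra.
From mathcomp Require Import all_classical all_reals.
From mathcomp Require Import all_analysis.
From mathcomp Require Import complex.
From mathcomp Require Import zify ring lra.

(* Write gamma = k(t1) a(e^-r) k(t2) and e_pm = e^(r/2) +- e^(-r/2).  The Gaussian
   integers z = (a + d) + i (b - c) and w = (d - a) + i (b + c) are e_+ e^(i (t1 + t2))
   and e_- e^(i (t1 - t2)), of norms n + 2 and n - 2, so the summand of S_e is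
   (z/|z|)^(m1 + m2) (w/|w|)^(m1 - m2); and gamma |-> (z, w) is a bijection onto the
   pairs of such norms with z = w mod 2.  Rotating (z, w) to (i z, i w), resp.
   (i z, -i w), permutes these pairs and multiplies the sum by i^(2 m1), resp.
   i^(2 m2), so it vanishes unless m1 and m2 are even.  Then the sum factors:
   for n = 2 mod 4 all coordinates are even and the congruence is automatic; for
   n = 3 mod 4 it says that Re z and Re w have the same parity, and rotation by i
   and negation relate the two parity classes to the primary elements; otherwise
   n + 2 or n - 2 is 3 mod 4 or 6 mod 8, which is never a sum of two squares. *)

Set Implicit Arguments.
Unset Strict Implicit.
Unset Printing Implicit Defensive.

Import Order.TTheory GRing.Theory Num.Theory.
Local Open Scope ring_scope.
Local Open Scope complex_scope.

Lemma reindex_inj_seq (R : Type) (idx : R) (op : Monoid.com_law idx)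
    (T : eqType) (s : seq T) (f : T -> T) (P : pred T) (F : T -> R) :
  uniq s -> injective f -> {in s, forall x, f x \in s} ->
  \big[op/idx]_(x <- s | P x) F x = \big[op/idx]_(x <- s | P (f x)) F (f x).
Proof.
move=> s_uniq f_inj f_s.
suff fs_perm : perm_eq s (map f s) by rewrite (perm_big _ fs_perm) big_map.
have fs_uniq : uniq (map f s) by rewrite map_inj_uniq.
have fs_sub : {subset map f s <= s} by move=> _ /mapP[x xs ->]; apply: f_s.
have [_ fs_eq] := uniq_min_size fs_uniq fs_sub (eq_leq (esym (size_map f s))).
by apply: uniq_perm => // x; rewrite fs_eq.
Qed.

Lemma mem_allpairs_pair (S T : eqType) (s : seq S) (t : seq T) (x : S) (y : T) :
  ((x, y) \in [seq (a, b) | a <- s, b <- t]) = (x \in s) && (y \in t).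
Proof.
by apply/allpairsP/andP => [[[a b] /= [? ? [-> ->]]] // | [? ?]]; exists (x, y).
Qed.

Lemma allpairs_pair_uniq (S T : eqType) (s : seq S) (t : seq T) :
  uniq s -> uniq t -> uniq [seq (a, b) | a <- s, b <- t].
Proof. by move=> ? ?; apply: allpairs_uniq => // [[? ?] [? ?]]. Qed.

Lemma mem_rng (n : nat) (x : int) : (x \in rng n) = (- n%:Z <= x <= n%:Z).
Proof.
apply/mapP/idP => [[k] | x_bnd]; first by rewrite mem_iota => ? ->; lia.
by exists (absz (x + n%:Z)); [rewrite mem_iota | ]; lia.
Qed.

Lemma rng_uniq (n : nat) : uniq (rng n).
Proof. by rewrite map_inj_uniq ?iota_uniq // => i j /eqP; rewrite subr_eq subrK => /eqP []. Qed.

Lemma mem_rng_sqr (n : nat) (x : int) : x ^+ 2 <= n%:Z -> x \in rng n.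
Proof.
rewrite mem_rng => x2_le.
have [x_le0 | x_ge1] : x <= 0 \/ 1 <= x by lia.
all: nia.
Qed.

(* A Gaussian integer x + i y is encoded as the pair (x, y). *)
Definition gaussN (z : int * int) : int := z.1 ^+ 2 + z.2 ^+ 2.
Definition grot (z : int * int) : int * int := (- z.2, z.1).
Definition grotV (z : int * int) : int * int := (z.2, - z.1).
Definition gopp (z : int * int) : int * int := (- z.1, - z.2).
Definition gcongr2 (z w : int * int) : bool := (2 %| z.1 - w.1)%Z && (2 %| z.2 - w.2)%Z.

Definition box (n : nat) : seq (int * int) := [seq (x, y) | x <- rng n, y <- rng n].
Definition circle (n : nat) : seq (int * int) := [seq z <- box n | gaussN z == n%:Z].

Lemma circle_uniq (n : nat) : uniq (circle n).
Proof. by rewrite filter_uniq // allpairs_pair_uniq ?rng_uniq. Qed.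

Lemma mem_circle (n : nat) (z : int * int) : (z \in circle n) = (gaussN z == n%:Z).
Proof.
case: z => x y; rewrite mem_filter mem_allpairs_pair /gaussN /=.
by case: eqP => //= xy_n; rewrite !mem_rng_sqr //; lia.
Qed.

Lemma reindex_circle (V : nmodType) (f : int * int -> int * int) (n : nat)
    (P : pred (int * int)) (F : int * int -> V) :
  injective f -> (forall z, gaussN (f z) = gaussN z) ->
  \sum_(z <- circle n | P z) F z = \sum_(z <- circle n | P (f z)) F (f z).
Proof.
by move=> f_inj fN; apply: reindex_inj_seq; rewrite ?circle_uniq // => z; rewrite !mem_circle fN.
Qed.

Lemma grot_inj : injective grot.
Proof. by move=> [x y] [x' y'] [] *; congr (_, _); lia. Qed.

Lemma grotV_inj : injective grotV.
Proof. by move=> [x y] [x' y'] [] *; congr (_, _); lia. Qed.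

Lemma gopp_inj : injective gopp.
Proof. by move=> [x y] [x' y'] [] *; congr (_, _); lia. Qed.

Lemma gaussN_grot (z : int * int) : gaussN (grot z) = gaussN z.
Proof. by rewrite /gaussN /= sqrrN addrC. Qed.

Lemma gaussN_grotV (z : int * int) : gaussN (grotV z) = gaussN z.
Proof. by rewrite /gaussN /= sqrrN addrC. Qed.

Lemma gaussN_gopp (z : int * int) : gaussN (gopp z) = gaussN z.
Proof. by rewrite /gaussN /= !sqrrN. Qed.

Lemma sqr_mod8 (x : int) : exists k j : int,
  (x = 2 * j /\ (x ^+ 2 = 8 * k \/ x ^+ 2 = 8 * k + 4)) \/ (x = 2 * j + 1 /\ x ^+ 2 = 8 * k + 1).
Proof.
have [j [r [-> r_bnd]]] : exists j r : int, x = 4 * j + r /\ 0 <= r < 4.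
  by exists (x %/ 4)%Z, (x %% 4)%Z; rewrite mulrC -divz_eq modz_ge0 ?ltz_pmod.
have [->|[->|[->|->]]] : r = 0 \/ r = 1 \/ r = 2 \/ r = 3 by lia.
- by exists (2 * j ^+ 2), (2 * j); left; split; [ring | left; ring].
- by exists (2 * j ^+ 2 + j), (2 * j); right; split; ring.
- by exists (2 * j ^+ 2 + 2 * j), (2 * j + 1); left; split; [ring | right; ring].
- by exists (2 * j ^+ 2 + 3 * j + 1), (2 * j + 1); right; split; ring.
Qed.

Lemma gaussN_dvd4 (z : int * int) : (4 %| gaussN z)%Z -> (2 %| z.1)%Z && (2 %| z.2)%Z.
Proof. by have [k1 [j1]] := sqr_mod8 z.1; have [k2 [j2]] := sqr_mod8 z.2; rewrite /gaussN; lia. Qed.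

Lemma gaussN_odd (z : int * int) : ~~ (2 %| gaussN z)%Z -> (2 %| z.1)%Z = ~~ (2 %| z.2)%Z.
Proof. by have [k1 [j1]] := sqr_mod8 z.1; have [k2 [j2]] := sqr_mod8 z.2; rewrite /gaussN; lia. Qed.

Lemma gaussN_neq_mod (z : int * int) : ((gaussN z %% 4)%Z != 3) && ((gaussN z %% 8)%Z != 6).
Proof. by have [k1 [j1]] := sqr_mod8 z.1; have [k2 [j2]] := sqr_mod8 z.2; rewrite /gaussN; lia. Qed.

Lemma circle_nil (n : nat) : (n %% 4 == 3)%N || (n %% 8 == 6)%N -> circle n = [::].
Proof.
case E: (circle n) => [//|z s] n_mod.
have : z \in circle n by rewrite E mem_head.
by rewrite mem_circle => /eqP z_n; move: (gaussN_neq_mod z); rewrite z_n; lia.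
Qed.

Lemma circle_odd (N : nat) (z : int * int) :
  odd N -> z \in circle N -> (2 %| z.1)%Z = ~~ (2 %| z.2)%Z.
Proof.
by move=> N_odd; rewrite mem_circle => /eqP zN; apply: gaussN_odd; rewrite zN dvdzE dvdn2 negbK.
Qed.

Lemma gcongr2_odd (z w : int * int) :
  (2 %| z.1)%Z = ~~ (2 %| z.2)%Z -> (2 %| w.1)%Z = ~~ (2 %| w.2)%Z ->
  gcongr2 z w = ((2 %| z.1)%Z == (2 %| w.1)%Z).
Proof. by rewrite /gcongr2; lia. Qed.

Lemma primaryE (x y : int) : primary x y = (2 %| y)%Z && (4 %| x - 1 - y)%Z.
Proof. by rewrite /primary /gdvd; apply/andP/andP => -[? ?]; split; lia. Qed.

Lemma primary_odd (x y : int) : primary x y -> ~~ (2 %| x)%Z.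
Proof. by rewrite primaryE; lia. Qed.

Lemma primaryN (x y : int) :
  ~~ (2 %| x)%Z -> (2 %| y)%Z -> primary (- x) (- y) = ~~ primary x y.
Proof. by rewrite !primaryE; lia. Qed.

Section GaussianUnits.
Variable R : realType.

Lemma expi0 : expi (0 : R) = 1.
Proof. by rewrite /expi cos0 sin0. Qed.

Lemma expiD (s t : R) : expi (s + t) = expi s * expi t.
Proof. by rewrite /expi cosD sinD; congr (_ +i* _); ring. Qed.

Lemma expiN (t : R) : expi (- t) = (expi t)^-1.
Proof. by apply/esym/mulr1_eq; rewrite -expiD subrr expi0. Qed.

Lemma expiMn (t : R) (k : nat) : expi (t * k%:R) = expi t ^+ k.
Proof. by elim: k => [|k IHk]; rewrite ?mulr0 ?expi0 // mulrS mulrDr mulr1 expiD IHk exprS. Qed.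

Lemma expiMz (t : R) (k : int) : expi (t * k%:~R) = expi t ^ k.
Proof. by case: k => k; rewrite ?NegzE ?rmorphN /= ?mulrN ?expiN expiMn. Qed.

Lemma expN1z (k : int) : (-1 : R[i]) ^ k = if (2 %| k)%Z then 1 else -1.
Proof. by rewrite expN1r -signr_odd dvdzE dvdn2; case: (odd _). Qed.

Lemma expNz_even (x : R[i]) (k : int) : (2 %| k)%Z -> (- x) ^ k = x ^ k.
Proof. by move=> k_even; rewrite expNrz expN1z k_even mul1r. Qed.

Lemma imag_unit_exp2z (k : int) : 'i%C ^ (2 * k) = if (2 %| k)%Z then 1 else -1 :> R[i].
Proof. by rewrite -exprz_exp -exprnP sqr_i expN1z. Qed.

Lemma i_neq0 : 'i%C != 0 :> R[i].
Proof. by rewrite eq_complex negb_and oner_eq0 orbT. Qed.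

Lemma zunit_opp (z : int * int) (n : nat) :
  zunit R (gopp z).1 (gopp z).2 n = - zunit R z.1 z.2 n.
Proof. by rewrite /zunit -mulNr !rmorphN. Qed.

Lemma zunit_rot (z : int * int) (n : nat) :
  zunit R (grot z).1 (grot z).2 n = 'i * zunit R z.1 z.2 n.
Proof. by rewrite /zunit mulrA /= rmorphN; congr (_ / _); congr (_ +i* _); ring. Qed.

Lemma zunit_rotV (z : int * int) (n : nat) :
  zunit R (grotV z).1 (grotV z).2 n = 'i^-1 * zunit R z.1 z.2 n.
Proof.
have -> : 'i^-1 = - 'i :> R[i] by apply: mulr1_eq; rewrite mulrN -expr2 sqr_i opprK.
by rewrite /zunit mulrA /= rmorphN; congr (_ / _); congr (_ +i* _); ring.
Qed.

Lemma zunit_polar (x y : int) (n : nat) (rho t : R) : 0 < rho ->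
  x%:~R = rho * cos t -> y%:~R = rho * sin t -> x ^+ 2 + y ^+ 2 = n%:Z ->
  zunit R x y n = expi t.
Proof.
move=> rho_gt0 xE yE xy_n.
have sqrt_n : Num.sqrt (n%:R : R) = rho.
  have -> : (n%:R : R) = rho ^+ 2.
    rewrite -[n%:R]/((n%:Z)%:~R) -xy_n rmorphD !rmorphXn /= xE yE.
    by rewrite !exprMn -mulrDr cos2Dsin2 mulr1.
  by rewrite sqrtr_sqr gtr0_norm.
rewrite /zunit sqrt_n xE yE.
have -> : (rho * cos t) +i* (rho * sin t) = expi t * rho%:C.
  by rewrite /expi /=; congr (_ +i* _); ring.
by rewrite mulfK // eq_complex /= negb_and gt_eqF.
Qed.

End GaussianUnits.

Lemma map_mx22 (S T : Type) (f : S -> T) (a b c d : S) :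
  map_mx f (mx22 a b c d) = mx22 (f a) (f b) (f c) (f d).
Proof. by apply/matrixP => i j; rewrite !mxE; case: ifP; case: ifP. Qed.

Lemma det_mx22 (T : comRingType) (a b c d : T) : \det (mx22 a b c d) = a * d - b * c.
Proof.
rewrite (expand_det_row _ ord0) !big_ord_recr big_ord0 /= /cofactor !det_mx11 !mxE /=.
by rewrite add0r expr0 expr1 mul1r mulN1r mulrN mulrC [b * _]mulrC.
Qed.

Lemma nuH_mx22 (a b c d : int) : nuH (mx22 a b c d) = a ^+ 2 + b ^+ 2 + c ^+ 2 + d ^+ 2.
Proof. by rewrite /nuH !big_ord_recr !big_ord0 /= !mxE /= !add0r addrA. Qed.

Section KAK.
Variable R : realType.

Lemma kak_sum_diff (t1 t2 r a b c d : R) :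
  mx22 a b c d = kmat t1 *m amat r *m kmat t2 ->
  [/\ a + d = (expR (r / 2) + expR (- r / 2)) * cos (t1 + t2),
      b - c = (expR (r / 2) + expR (- r / 2)) * sin (t1 + t2),
      d - a = (expR (r / 2) - expR (- r / 2)) * cos (t1 - t2) &
      b + c = (expR (r / 2) - expR (- r / 2)) * sin (t1 - t2)].
Proof.
move=> kak; have entry (i j : 'I_2) := congr1 (fun M : 'M[R]_2 => M i j) kak.
move: (entry 0 0) (entry 0 1) (entry 1 0) (entry 1 1).
rewrite /kmat /amat !mxE !big_ord_recr !big_ord0 /= !mxE !big_ord_recr !big_ord0 /= !mxE /=.
by move=> -> -> -> ->; rewrite cosD sinD cosB sinB; split; ring.
Qed.

Lemma expi_kak (t1 t2 r : R) (a b c d : int) (N1 N2 : nat) (m1 m2 : int) : 0 < r ->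
  map_mx intr (mx22 a b c d) = kmat t1 *m amat r *m kmat t2 ->
  gaussN (a + d, b - c) = N1%:Z -> gaussN (d - a, b + c) = N2%:Z ->
  expi (2 * t1 * m1%:~R + 2 * t2 * m2%:~R) =
    zunit R (a + d) (b - c) N1 ^ (m1 + m2) * zunit R (d - a) (b + c) N2 ^ (m1 - m2).
Proof.
rewrite map_mx22 => r_gt0 /kak_sum_diff[]; rewrite -!rmorphD -!rmorphB /= => z1 z2 w1 w2 zN wN.
have e_lt_f : expR (- r / 2) < expR (r / 2) by rewrite ltr_expR; lra.
rewrite (zunit_polar _ z1 z2 zN); last by apply: addr_gt0; apply: expR_gt0.
rewrite (zunit_polar _ w1 w2 wN); last by rewrite subr_gt0.
rewrite -!expiMz -expiD rmorphD rmorphB /=; congr expi; ring.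
Qed.

End KAK.

Definition mx_of_rows (g : (int * int) * (int * int)) : 'M[int]_2 :=
  mx22 g.1.1 g.1.2 g.2.1 g.2.2.

Definition sl2_sphere (n : nat) : seq ((int * int) * (int * int)) :=
  [seq g <- [seq (u, v) | u <- box n, v <- box n]
     | (\det (mx_of_rows g) == 1) && (nuH (mx_of_rows g) == n%:Z)].

Definition gauss_pairs (n : nat) : seq ((int * int) * (int * int)) :=
  [seq q <- [seq (z, w) | z <- circle n.+2, w <- circle (n - 2)] | gcongr2 q.1 q.2].

Definition sl2_gauss (g : (int * int) * (int * int)) : (int * int) * (int * int) :=
  ((g.1.1 + g.2.2, g.1.2 - g.2.1), (g.2.2 - g.1.1, g.1.2 + g.2.1)).

Lemma mem_sl2_sphere (n : nat) (a b c d : int) :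
  (((a, b), (c, d)) \in sl2_sphere n) =
    (a * d - b * c == 1) && (a ^+ 2 + b ^+ 2 + c ^+ 2 + d ^+ 2 == n%:Z).
Proof.
rewrite mem_filter mem_allpairs_pair /box !mem_allpairs_pair.
rewrite (_ : mx_of_rows _ = mx22 a b c d) // det_mx22 nuH_mx22.
by case: eqP => //= _; case: eqP => //= nu_n; rewrite !mem_rng_sqr //; lia.
Qed.

Lemma gaussN_sl2_gauss (a b c d : int) :
  gaussN (a + d, b - c) = a ^+ 2 + b ^+ 2 + c ^+ 2 + d ^+ 2 + 2 * (a * d - b * c) /\
  gaussN (d - a, b + c) = a ^+ 2 + b ^+ 2 + c ^+ 2 + d ^+ 2 - 2 * (a * d - b * c).
Proof. by rewrite /gaussN /=; split; ring. Qed.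

Lemma sl2_gauss_inj : injective sl2_gauss.
Proof. by move=> [[a b] [c d]] [[a' b'] [c' d']] [] *; congr ((_, _), (_, _)); lia. Qed.

Lemma sl2_gauss_sphere (n : nat) (g : (int * int) * (int * int)) : (2 <= n)%N ->
  g \in sl2_sphere n -> sl2_gauss g \in gauss_pairs n.
Proof.
case: g => [[a b] [c d]] n_ge2; rewrite mem_sl2_sphere => /andP[/eqP det1 /eqP nu_n].
have [zN wN] := gaussN_sl2_gauss a b c d.
rewrite mem_filter mem_allpairs_pair !mem_circle zN wN det1 nu_n /gcongr2 /=.
apply/andP; split; first by apply/andP; split; apply/dvdzP; [exists a | exists (- c)]; ring.
by apply/andP; split; apply/eqP; lia.
Qed.

(* The inverse of sl2_gauss: a = (x - x')/2, b = (y + y')/2, c = (y' - y)/2, d = (x + x')/2. *)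
Lemma gauss_pairs_sl2 (n : nat) (q : (int * int) * (int * int)) : (2 <= n)%N ->
  q \in gauss_pairs n -> exists2 g, g \in sl2_sphere n & q = sl2_gauss g.
Proof.
case: q => [[x y] [x' y']] n_ge2.
rewrite mem_filter mem_allpairs_pair !mem_circle /gcongr2 /gaussN /=.
case/andP=> /andP[/dvdzP[k1 xE] /dvdzP[k2 yE]] /andP[/eqP zN /eqP wN].
have {}xE : x = x' + k1 * 2 by rewrite -xE subrKC.
have {}yE : y = y' + k2 * 2 by rewrite -yE subrKC.
subst x y.
exists ((k1, y' + k2), (- k2, x' + k1)).
  2: by rewrite /sl2_gauss /=; congr ((_, _), (_, _)); ring.
have det4 : 4 * (k1 * (x' + k1) - (y' + k2) * - k2) =
            (x' + k1 * 2) ^+ 2 + (y' + k2 * 2) ^+ 2 - (x' ^+ 2 + y' ^+ 2) by ring.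
have nu2 : 2 * (k1 ^+ 2 + (y' + k2) ^+ 2 + (- k2) ^+ 2 + (x' + k1) ^+ 2) =
           (x' + k1 * 2) ^+ 2 + (y' + k2 * 2) ^+ 2 + (x' ^+ 2 + y' ^+ 2) by ring.
have w_n : x' ^+ 2 + y' ^+ 2 = n%:Z - 2 by rewrite wN subzn.
rewrite mem_sl2_sphere; apply/andP; split; apply/eqP.
  by apply: (@mulfI _ 4) => //; rewrite det4 zN w_n -addn2 PoszD; ring.
by apply: (@mulfI _ 2) => //; rewrite nu2 zN w_n -addn2 PoszD; ring.
Qed.

Lemma perm_sl2_gauss (n : nat) : (2 <= n)%N ->
  perm_eq (map sl2_gauss (sl2_sphere n)) (gauss_pairs n).
Proof.
move=> n_ge2; apply: uniq_perm.
- rewrite map_inj_uniq ?filter_uniq ?allpairs_pair_uniq ?rng_uniq //.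
  exact: sl2_gauss_inj.
- by rewrite filter_uniq ?allpairs_pair_uniq ?circle_uniq.
move=> q; apply/mapP/idP => [[g g_sphere ->] | /(gauss_pairs_sl2 n_ge2)[g]].
  exact: sl2_gauss_sphere.
by exists g.
Qed.

Section GaussPairSum.
Variable R : realType.

Lemma W_circle (K : int) (N : nat) :
  W R K N = 4^-1 * \sum_(z <- circle N) zunit R z.1 z.2 N ^ K.
Proof.
rewrite /W /circle big_filter [in RHS]big_mkcond /box big_allpairs; congr (_ * _).
by apply: eq_bigr => x _; rewrite [LHS]big_mkcond.
Qed.

Lemma WPodd_circle (K : int) (N : nat) :
  WPodd R K N = \sum_(z <- circle N | primary z.1 z.2) zunit R z.1 z.2 N ^ K.
Proof.
rewrite /WPodd /circle big_filter_cond [RHS]big_mkcond /box big_allpairs.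
by apply: eq_bigr => x _; rewrite [LHS]big_mkcond.
Qed.

Lemma WP_odd (K : int) (N : nat) : odd N -> WP R K N = WPodd R K N.
Proof.
move=> N_odd; rewrite /WP logn_coprime ?coprime2n // expn0 divn1.
by rewrite mulr0 !mul0r expi0 mul1r.
Qed.

Lemma circle_sum_even_rot (N : nat) (K : int) : odd N ->
  \sum_(z <- circle N | (2 %| z.1)%Z) zunit R z.1 z.2 N ^ K =
    'i%C ^ K * \sum_(z <- circle N | ~~ (2 %| z.1)%Z) zunit R z.1 z.2 N ^ K.
Proof.
move=> N_odd; rewrite [LHS](reindex_circle _ _ _ grot_inj gaussN_grot) mulr_sumr.
rewrite [LHS]big_seq_cond [RHS]big_seq_cond; apply: eq_big => [z | z _]; last first.
  by rewrite zunit_rot expfzMl.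
case z_in: (z \in circle N) => //=.
by rewrite (circle_odd N_odd z_in) /grot /= rpredN negbK.
Qed.

Lemma circle_sum_odd (N : nat) (K : int) : odd N -> (2 %| K)%Z ->
  \sum_(z <- circle N | ~~ (2 %| z.1)%Z) zunit R z.1 z.2 N ^ K = 2 * WPodd R K N.
Proof.
move=> N_odd K_even; rewrite WPodd_circle (bigID (fun z => primary z.1 z.2)) /=.
rewrite (eq_bigl (fun z => primary z.1 z.2)); last first.
  by move=> z; case: (boolP (primary _ _)) => [/primary_odd -> | ]; rewrite ?andbF.
rewrite mulr_natl mulr2n; congr (_ + _).
rewrite [LHS](reindex_circle _ _ _ gopp_inj gaussN_gopp).
rewrite [LHS]big_seq_cond [RHS]big_seq_cond; apply: eq_big => [z | z _]; last first.
  by rewrite zunit_opp expNz_even.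
case z_in: (z \in circle N) => //=; have z_par := circle_odd N_odd z_in.
rewrite /gopp /= rpredN; case: (boolP (2 %| z.1)%Z) => [z1_even | z1_odd] /=.
  by apply/esym/negbTE/negP => /primary_odd; rewrite z1_even.
by rewrite primaryN ?negbK // -[(2 %| z.2)%Z]negbK -z_par.
Qed.

Definition gauss_pair_sum (n : nat) (M M' : int) : R[i] :=
  \sum_(z <- circle n.+2) \sum_(w <- circle (n - 2) | gcongr2 z w)
     zunit R z.1 z.2 n.+2 ^ M * zunit R w.1 w.2 (n - 2) ^ M'.

Lemma Se_gauss_pair_sum (th1 th2 : 'M[int]_2 -> R)
  (Hdec : forall g : 'M[int]_2, \det g = 1 -> 2 < nuH g ->
     exists r : R, 0 < r /\
       map_mx (fun z : int => z%:~R) g = kmat (th1 g) *m amat r *m kmat (th2 g))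
  (m1 m2 : int) (n : nat) : (3 <= n)%N ->
  Se th1 th2 m1 m2 n = gauss_pair_sum n (m1 + m2) (m1 - m2).
Proof.
move=> n_ge3.
pose G q := zunit R q.1.1 q.1.2 n.+2 ^ (m1 + m2) * zunit R q.2.1 q.2.2 (n - 2) ^ (m1 - m2).
transitivity (\sum_(g <- sl2_sphere n) G (sl2_gauss g)).
  rewrite /Se /sl2_sphere big_filter [RHS]big_mkcond big_allpairs /box big_allpairs.
  apply: eq_bigr => a _; apply: eq_bigr => b _; rewrite big_allpairs; apply: eq_bigr => c _.
  rewrite [LHS]big_mkcond; apply: eq_bigr => d _; case: ifP => // /andP[].
  rewrite /mx_of_rows /= => /eqP det1 /eqP nu_n.
  have [|r [r_gt0 kak]] := Hdec _ det1; first by rewrite nu_n; lia.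
  have [zN wN] := gaussN_sl2_gauss a b c d.
  rewrite -det_mx22 -nuH_mx22 det1 nu_n in zN wN.
  by apply: expi_kak kak _ _ => //; rewrite ?zN ?wN; lia.
rewrite -(big_map sl2_gauss predT) (perm_big _ (perm_sl2_gauss (ltnW n_ge3))).
rewrite /gauss_pairs big_filter big_mkcond big_allpairs.
by apply: eq_bigr => z _; rewrite [RHS]big_mkcond.
Qed.

Lemma gauss_pair_sum_scale (f g : int * int -> int * int) (cf cg : R[i]) (n : nat)
    (M M' : int) :
  injective f -> injective g ->
  (forall z, gaussN (f z) = gaussN z) -> (forall w, gaussN (g w) = gaussN w) ->
  (forall z w, gcongr2 (f z) (g w) = gcongr2 z w) ->
  (forall z N, zunit R (f z).1 (f z).2 N = cf * zunit R z.1 z.2 N) ->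
  (forall w N, zunit R (g w).1 (g w).2 N = cg * zunit R w.1 w.2 N) ->
  gauss_pair_sum n M M' = cf ^ M * cg ^ M' * gauss_pair_sum n M M'.
Proof.
move=> f_inj g_inj fN gN fg_congr fU gU; rewrite /gauss_pair_sum mulr_sumr.
rewrite [LHS](reindex_circle _ _ _ f_inj fN); apply: eq_bigr => z _.
rewrite [LHS](reindex_circle _ _ _ g_inj gN) mulr_sumr; apply: eq_big => [w | w _].
  by rewrite fg_congr.
by rewrite fU gU !expfzMl mulrACA.
Qed.

Lemma gauss_pair_sum_odd (n : nat) (m1 m2 : int) :
  ~~ (2 %| m1)%Z || ~~ (2 %| m2)%Z -> gauss_pair_sum n (m1 + m2) (m1 - m2) = 0.
Proof.
move=> m_odd; set s := gauss_pair_sum n _ _.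
suff [c c_eq s_eq] : exists2 c, c = -1 & s = c * s.
  have : s *+ 2 = 0 by rewrite mulr2n {1}s_eq c_eq mulN1r addNr.
  by move/eqP; rewrite mulrn_eq0 => /eqP.
case: (boolP (2 %| m1)%Z) => m1_even.
- exists ('i%C ^ (m1 + m2) * 'i%C^-1 ^ (m1 - m2)).
    rewrite exprz_inv -expfzDr ?i_neq0 // (_ : _ + _ = 2 * m2); last by ring.
    by rewrite imag_unit_exp2z; move: m_odd; rewrite m1_even /= => /negbTE ->.
  apply: gauss_pair_sum_scale; [exact: grot_inj | exact: grotV_inj | exact: gaussN_grot
    | exact: gaussN_grotV | | exact: zunit_rot | exact: zunit_rotV].
  by move=> [x y] [x' y']; rewrite /gcongr2 /=; lia.
- exists ('i%C ^ (m1 + m2) * 'i%C ^ (m1 - m2)).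
    rewrite -expfzDr ?i_neq0 // (_ : _ + _ = 2 * m1); last by ring.
    by rewrite imag_unit_exp2z (negbTE m1_even).
  apply: gauss_pair_sum_scale; [exact: grot_inj | exact: grot_inj | exact: gaussN_grot
    | exact: gaussN_grot | | exact: zunit_rot | exact: zunit_rot].
  by move=> [x y] [x' y']; rewrite /gcongr2 /=; lia.
Qed.

Lemma gauss_pair_sum_mod4_2 (n : nat) (M M' : int) : (n %% 4 == 2)%N ->
  gauss_pair_sum n M M' = 16 * W R M n.+2 * W R M' (n - 2).
Proof.
move=> n_mod4.
have even_pt N z : (4 %| N)%N -> z \in circle N -> (2 %| z.1)%Z && (2 %| z.2)%Z.
  by move=> N4; rewrite mem_circle => /eqP zN; apply: gaussN_dvd4; rewrite zN dvdzE.
have n2_4 : (4 %| n.+2)%N by lia.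
have n2_4' : (4 %| n - 2)%N by lia.
have -> : gauss_pair_sum n M M' =
    (\sum_(z <- circle n.+2) zunit R z.1 z.2 n.+2 ^ M) *
    (\sum_(w <- circle (n - 2)) zunit R w.1 w.2 (n - 2) ^ M').
  rewrite big_distrlr /=.
  apply: eq_big_seq => z z_in; rewrite big_seq_cond [RHS]big_seq; apply: eq_bigl => w.
  case w_in: (w \in _) => //=.
  have /andP[z1_even z2_even] := even_pt _ _ n2_4 z_in.
  have /andP[w1_even w2_even] := even_pt _ _ n2_4' w_in.
  by rewrite /gcongr2 !rpredB.
have four_neq0 : (4 : R[i]) != 0 by rewrite pnatr_eq0.
by rewrite !W_circle; field.
Qed.

Lemma gauss_pair_sum_parity_split (n : nat) (M M' : int) : odd n -> (2 <= n)%N ->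
  gauss_pair_sum n M M' =
    (\sum_(z <- circle n.+2 | (2 %| z.1)%Z) zunit R z.1 z.2 n.+2 ^ M) *
    (\sum_(w <- circle (n - 2) | (2 %| w.1)%Z) zunit R w.1 w.2 (n - 2) ^ M') +
    (\sum_(z <- circle n.+2 | ~~ (2 %| z.1)%Z) zunit R z.1 z.2 n.+2 ^ M) *
    (\sum_(w <- circle (n - 2) | ~~ (2 %| w.1)%Z) zunit R w.1 w.2 (n - 2) ^ M').
Proof.
move=> n_odd n_ge2.
have odd_n2 : odd n.+2 by rewrite /= negbK.
have odd_n2' : odd (n - 2) by rewrite oddB ?n_odd.
rewrite /gauss_pair_sum (bigID (fun z => (2 %| z.1)%Z)) /= !big_distrlr /=.
congr (_ + _); rewrite [LHS]big_seq_cond [RHS]big_seq_cond.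
all: apply: eq_bigr => z /andP[z_in z_par]; rewrite [LHS]big_seq_cond [RHS]big_seq_cond.
all: apply: eq_bigl => w; case w_in: (w \in _) => //=.
all: rewrite (gcongr2_odd (circle_odd _ z_in) (circle_odd _ w_in)).
all: by move: z_par; case: (2 %| z.1)%Z; case: (2 %| w.1)%Z.
Qed.

Lemma gauss_pair_sum_mod4_3 (n : nat) (m1 m2 : int) :
  (n %% 4 == 3)%N -> (2 %| m1)%Z -> (2 %| m2)%Z ->
  gauss_pair_sum n (m1 + m2) (m1 - m2) = 8 * WP R (m1 + m2) n.+2 * WP R (m1 - m2) (n - 2).
Proof.
move=> n_mod4 m1_even m2_even.
have n_odd : odd n by rewrite (divn_eq n 4) (eqP n_mod4) oddD oddM andbF.
have n_ge2 : (2 <= n)%N by lia.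
have odd_n2 : odd n.+2 by rewrite /= negbK.
have odd_n2' : odd (n - 2) by rewrite oddB ?n_odd.
have i_pow : 'i%C ^ (m1 + m2) * 'i%C ^ (m1 - m2) = 1 :> R[i].
  by rewrite -expfzDr ?i_neq0 // (_ : _ + _ = 2 * m1) ?imag_unit_exp2z ?m1_even //; ring.
have M_even : (2 %| m1 + m2)%Z by rewrite rpredD.
have M'_even : (2 %| m1 - m2)%Z by rewrite rpredB.
rewrite gauss_pair_sum_parity_split // !circle_sum_even_rot // !circle_sum_odd //.
rewrite !WP_odd //.
move: i_pow (WPodd R (m1 + m2) n.+2) (WPodd R (m1 - m2) (n - 2)).
move: ('i%C ^ (m1 + m2)) ('i%C ^ (m1 - m2)) => a b ab1 X Y.
by transitivity ((a * b + 1) * 4 * X * Y); [ring | rewrite ab1; ring].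
Qed.

Lemma gauss_pair_sum_mod4_01 (n : nat) (M M' : int) :
  (3 <= n)%N -> (n %% 4 != 2)%N -> (n %% 4 != 3)%N -> gauss_pair_sum n M M' = 0.
Proof.
move=> n_ge3 n_mod4_2 n_mod4_3; rewrite /gauss_pair_sum.
have [outer | inner] : (n.+2 %% 4 == 3)%N || (n.+2 %% 8 == 6)%N \/
                       ((n - 2) %% 4 == 3)%N || ((n - 2) %% 8 == 6)%N by lia.
  by rewrite (circle_nil outer) big_nil.
by rewrite big1 // => z _; rewrite (circle_nil inner) big_nil.
Qed.

End GaussPairSum.

Theorem lemma3p6 (R : realType) (th1 th2 : 'M[int]_2 -> R)
  (Hdec : forall g : 'M[int]_2, \det g = 1 -> 2 < nuH g ->
     exists r : R, 0 < r /\
       map_mx (fun z : int => z%:~R) g = kmat (th1 g) *m amat r *m kmat (th2 g))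
  (m1 m2 : int) (n : nat) (hn : (3 <= n)%N) :
  (~~ (2 %| m1)%Z || ~~ (2 %| m2)%Z -> Se th1 th2 m1 m2 n = 0) /\
  ((2 %| m1)%Z && (2 %| m2)%Z ->
     Se th1 th2 m1 m2 n =
       if (n %% 4 == 2)%N then 16 * W R (m1 + m2) n.+2 * W R (m1 - m2) (n - 2)
       else if (n %% 4 == 3)%N then 8 * WP R (m1 + m2) n.+2 * WP R (m1 - m2) (n - 2)
       else 0).
Proof.
rewrite (Se_gauss_pair_sum Hdec _ _ hn); split => [m_odd | /andP[m1_even m2_even]].
  exact: gauss_pair_sum_odd.
case: ifP => n_mod4_2; first exact: gauss_pair_sum_mod4_2.
case: ifP => n_mod4_3; first exact: gauss_pair_sum_mod4_3.
by apply: gauss_pair_sum_mod4_01; rewrite ?n_mod4_2 ?n_mod4_3.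
Qed.
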